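(* Let $\mathcal{A}=\{\mathbf{A},\mathbf{B},\mathbf{C},\mathbf{D}\}$, let $\mathcal{R}^\dagger$ be the symmetric relation on $\mathcal{A}$ whose related pairs are exactly $\{\mathbf{A},\mathbf{B}\}$, $\{\mathbf{B},\mathbf{D}\}$, $\{\mathbf{D},\mathbf{C}\}$, and let $\mathcal{H}$ be the base graph on $\{1,\dots,n\}$ defined as follows: if $n$ is even, $\mathcal{H}$ has edges $\{\sigma(i),\sigma(i+1)\}$, $i=1,\dots,n$ (indices modulo $n$), for some permutation $\sigma$ of $\{1,\dots,n\}$; if $n$ is odd, for a fixed vertex $u$ and a bijection $\sigma$ from $\{1,\dots,n-1\}$ onto $\{1,\dots,n\}\setminus\{u\}$, $\mathcal{H}$ has edges $\{\sigma(i),\sigma(i+1)\}$, $i=1,\dots,n-1$ (indices modulo $n-1$), and $u$ is isolated. Let $\mu_+=\frac{1+\sqrt5}{2}$ and $\mu_-=\frac{1-\sqrt5}{2}$. Then there exist at least $(\sqrt2)^{n-1}$ shapes $S$ (with respect to $\mathcal{H}$ and $\mathcal{R}^\dagger$) such that the number of sequences $v\in\mathcal{A}^n$ with $\mathcal{H}_{\mathcal{R}^\dagger}(v)=S$ is at least $2(\mu_+^n+\mu_-^n)$.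
   Context: For a sequence $v=(x_1,\dots,x_n)\in\mathcal{A}^n$, its shape $\mathcal{H}_{\mathcal{R}^\dagger}(v)$ is the graph with vertex set $\{1,\dots,n\}$ and edge set $\{\{i,k\}\in E_{\mathcal{H}}:(x_i,x_k)\in\mathcal{R}^\dagger\}$. A graph $S$ on $\{1,\dots,n\}$ is a shape if $S=\mathcal{H}_{\mathcal{R}^\dagger}(v)$ for some $v\in\mathcal{A}^n$; the sequences $v$ with $\mathcal{H}_{\mathcal{R}^\dagger}(v)=S$ are said to fold into $S$. *)

From Stdlib Require Import Reals.
From mathcomp Require Import all_boot perm.
Set Implicit Arguments. Unset Strict Implicit. Unset Printing Implicit Defensive.

Definition letter := 'I_4.
Definition lA : letter := inord 0.
Definition lB : letter := inord 1.
Definition lC : letter := inord 2.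
Definition lD : letter := inord 3.

Definition Rdag (x y : letter) : bool :=
  [|| (x == lA) && (y == lB), (x == lB) && (y == lA),
      (x == lB) && (y == lD), (x == lD) && (y == lB),
      (x == lD) && (y == lC) | (x == lC) && (y == lD)].

(* Graphs on the vertex set {1..n} (encoded as 'I_n) are given by their edge
   sets, each edge being an unordered pair {i,k} (a 2-element set). *)
Definition graph (n : nat) := {set {set 'I_n}}.

Definition cycle_edges (m n : nat) (s : 'I_m -> 'I_n) : graph n :=
  [set [set s i; s (ordS i)] | i : 'I_m].

Definition base_graph (n : nat) (H : graph n) : Prop :=
  (~~ odd n -> exists sigma : {perm 'I_n}, H = cycle_edges sigma) /\
  (odd n -> exists (u : 'I_n) (sigma : 'I_n.-1 -> 'I_n),
      injective sigma /\ [set sigma i | i : 'I_n.-1] = ~: [set u] /\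
      H = cycle_edges sigma).

Definition seqA (n : nat) := {ffun 'I_n -> letter}.

Definition shape (n : nat) (H : graph n) (v : seqA n) : graph n :=
  [set e in H | [exists i, exists k, (e == [set i; k]) && Rdag (v i) (v k)]].

Definition is_shape (n : nat) (H : graph n) (S : graph n) : bool :=
  [exists v : seqA n, shape H v == S].

Definition nfold (n : nat) (H : graph n) (S : graph n) : nat :=
  #|[set v : seqA n | shape H v == S]|.

Local Open Scope R_scope.
Definition mu_plus : R := (1 + sqrt 5) / 2.
Definition mu_minus : R := (1 - sqrt 5) / 2.

From Pilot Require Import Defs.
From Stdlib Require Import Reals Lra Lia.
From mathcomp Require Import all_boot perm zify.
Set Implicit Arguments. Unset Strict Implicit. Unset Printing Implicit Defensive.

(* Since 2 (mu_+^n + mu_-^n) = 2 L_n with L_n the n-th Lucas number, it suffices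
   to exhibit many shapes folded by at least 2 L_n sequences.  The cut of a vertex
   set U, i.e. the edges of H with exactly one end in U, is folded by all sequences
   that put B on U and A or D elsewhere, or D on U and B or C elsewhere: at least
   2 * 2^(n - |U|) of them, which beats 2 L_n once |U| <= (n + 2) / 4, except for
   n = 2 and n = 6.  On a cycle, vertex sets avoiding a fixed vertex have distinct
   cuts, and picking at most one of the last three vertices in each of about n/4
   consecutive blocks of four vertices yields about 2^(n/2) of them.  The cases
   n = 2 and n = 6 are settled by hand. *)

Lemma lAE : lA = @Ordinal 4 0 isT. Proof. exact/val_inj/inordK. Qed.
Lemma lBE : lB = @Ordinal 4 1 isT. Proof. exact/val_inj/inordK. Qed.
Lemma lCE : lC = @Ordinal 4 2 isT. Proof. exact/val_inj/inordK. Qed.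
Lemma lDE : lD = @Ordinal 4 3 isT. Proof. exact/val_inj/inordK. Qed.

Lemma Rdag_sym : symmetric Rdag.
Proof.
rewrite /Rdag lAE lBE lCE lDE.
by case=> [[|[|[|[|?]]]] ?]; case=> [[|[|[|[|?]]]] ?].
Qed.

Lemma Rdag_irr x : Rdag x x = false.
Proof. by rewrite /Rdag lAE lBE lCE lDE; case: x => [[|[|[|[|?]]]] ?]. Qed.

Definition Rdag_pairs : seq (letter * letter) :=
  [:: (lA, lB); (lB, lA); (lB, lD); (lD, lB); (lD, lC); (lC, lD)].

Lemma Rdag_pairs_uniq : uniq Rdag_pairs.
Proof. by rewrite /Rdag_pairs lAE lBE lCE lDE. Qed.

Lemma Rdag_pairs_rel p : p \in Rdag_pairs -> Rdag p.1 p.2.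
Proof. by move: p; apply/allP; rewrite /Rdag_pairs /Rdag lAE lBE lCE lDE. Qed.

(* The letter put at a vertex by the sequences folding into a cut: [inU] says
   whether the vertex lies in the cut set, [c] picks one of the two families and
   [w] the free choice outside the cut set. *)
Definition cut_letter (c inU w : bool) : letter :=
  if inU then (if c then lB else lD)
  else if w then (if c then lA else lB) else (if c then lD else lC).

Lemma Rdag_cut_letter c u w u' w' :
  Rdag (cut_letter c u w) (cut_letter c u' w') = (u != u').
Proof.
by rewrite /Rdag /cut_letter lAE lBE lCE lDE; case: c; case: u; case: w; case: u'; case: w'.
Qed.

Lemma cut_letter_inj c c' u w w' :
  cut_letter c u w = cut_letter c' u w' -> c = c' /\ (u || (w == w')).
Proof.
move/eqP; rewrite /cut_letter lAE lBE lCE lDE.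
by case: c; case: c'; case: u; case: w; case: w'.
Qed.

Lemma set2_eq (T : finType) (a b i k : T) :
  [set a; b] = [set i; k] -> (a, b) = (i, k) \/ (a, b) = (k, i).
Proof.
move=> E; have mem x : (x \in [set a; b]) = (x \in [set i; k]) by rewrite E.
move: (mem i) (mem k) (mem a) (mem b); rewrite !in_set2 !eqxx ?orbT /=.
by do 2 case/orP=> /eqP->; rewrite ?orbb;
  [move=> _ /esym/eqP-> | | | move=> /esym/eqP-> _]; auto.
Qed.

Section RelEdges.
Variables (n : nat) (H : graph n).

Definition rel_edges (r : rel 'I_n) : graph n :=
  [set e in H | [exists i, exists k, (e == [set i; k]) && r i k]].

Lemma shapeE (v : seqA n) : Defs.shape H v = rel_edges (fun i k => Rdag (v i) (v k)).
Proof. by []. Qed.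

Lemma eq_rel_edges r r' : r =2 r' -> rel_edges r = rel_edges r'.
Proof.
move=> rr'; apply/setP => e; rewrite !inE; congr (_ && _).
by apply: eq_existsb => i; apply: eq_existsb => k; rewrite rr'.
Qed.

Lemma mem_rel_edges r a b : symmetric r ->
  ([set a; b] \in rel_edges r) = ([set a; b] \in H) && r a b.
Proof.
move=> rsym; rewrite inE; congr (_ && _); apply/existsP/idP => [[i]|rab].
  by case/existsP=> k /andP [/eqP/set2_eq [] [-> ->]]; rewrite // rsym.
by exists a; apply/existsP; exists b; rewrite eqxx.
Qed.

Definition cut_edges (U : {set 'I_n}) : graph n :=
  rel_edges (fun i k => (i \in U) != (k \in U)).

Lemma mem_cut_edges U a b :
  ([set a; b] \in cut_edges U) = ([set a; b] \in H) && ((a \in U) != (b \in U)).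
Proof. by rewrite mem_rel_edges // => i k; rewrite eq_sym. Qed.

Definition cut_seq (U : {set 'I_n}) (c : bool) (W : {set 'I_n}) : seqA n :=
  [ffun x => cut_letter c (x \in U) (x \in W)].

Lemma shape_cut_seq U c W : Defs.shape H (cut_seq U c W) = cut_edges U.
Proof. by rewrite shapeE; apply: eq_rel_edges => i k; rewrite !ffunE Rdag_cut_letter. Qed.

Lemma cut_seq_inj (U : {set 'I_n}) : (0 < n)%N -> {in setX [set: bool] (powerset (~: U)) &,
  injective (fun cW : bool * {set 'I_n} => cut_seq U cW.1 cW.2)}.
Proof.
move=> n0 [c W] [c' W']; rewrite !inE /= => /subsetP sW /subsetP sW' E.
have letterE x : cut_letter c (x \in U) (x \in W) = cut_letter c' (x \in U) (x \in W').
  by have := congr1 (fun v : seqA n => v x) E; rewrite /= !ffunE.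
have [<- _] := cut_letter_inj (letterE (Ordinal n0)); congr pair; apply/setP => x.
case/cut_letter_inj: (letterE x) => _ /orP [xU|/eqP //].
by apply/idP/idP => [/sW|/sW']; rewrite inE xU.
Qed.

Lemma nfold_cut_edges (U : {set 'I_n}) :
  (0 < n)%N -> (2 * 2 ^ (n - #|U|) <= nfold H (cut_edges U))%N.
Proof.
move=> n0; have cardC : #|~: U| = n - #|U| by have := cardsC U; rewrite card_ord; lia.
have cardI : #|setX [set: bool] (powerset (~: U))| = (2 * 2 ^ (n - #|U|))%N.
  by rewrite cardsX cardsT card_bool card_powerset cardC.
rewrite -cardI -(card_in_imset (cut_seq_inj (U := U) n0)).
apply/subset_leq_card/subsetP => v.
by case/imsetP=> -[c W] _ ->; rewrite inE shape_cut_seq.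
Qed.

End RelEdges.

Fixpoint lucas (n : nat) : nat :=
  match n with 0 => 2 | 1 => 1 | (k.+1 as k1).+1 => lucas k1 + lucas k end.

Lemma lucas_le_double k : (2 <= k)%N -> (lucas k.+1 <= 2 * lucas k)%N.
Proof. by case: k => [|[|k]] // _; rewrite /=; lia. Qed.

Lemma lucas_step k : (2 <= k)%N -> (lucas k.+4 <= 8 * lucas k)%N.
Proof. by move=> k2; have := lucas_le_double k2; rewrite /=; lia. Qed.

Lemma lucas_le_pow2 n : (0 < n)%N -> n <> 2 -> n <> 6 ->
  (lucas n <= 2 ^ (n - (n + 2) %/ 4))%N.
Proof.
elim/ltn_ind: n => n IH n0 n2 n6.
have [small|big] := leqP n 10.
  by do 11! (case: n IH n0 n2 n6 small => [|n] IH n0 n2 n6 small //).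
have -> : n = (n - 4).+4 by lia.
apply: leq_trans (lucas_step _) _; first by lia.
have := IH (n - 4) ltac:(lia) ltac:(lia) ltac:(lia) ltac:(lia).
have -> : (n - 4).+4 - ((n - 4).+4 + 2) %/ 4 = (n - 4 - (n - 4 + 2) %/ 4) + 3 by lia.
by rewrite expnD; lia.
Qed.

Open Scope R_scope.

Lemma golden_pow_lucas x y : x ^ 2 = x + 1 -> y ^ 2 = y + 1 -> x + y = 1 ->
  forall n, x ^ n + y ^ n = INR (lucas n).
Proof.
move=> x2 y2 xy n.
have step z k : z ^ 2 = z + 1 -> z ^ k.+2 = z ^ k.+1 + z ^ k.
  by move=> z2; rewrite -addn2 pow_add z2 -addn1 pow_add /=; ring.
elim/ltn_ind: n => -[|[|n]] IH; try by rewrite /=; lra.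
rewrite (step x n x2) (step y n y2) (_ : lucas n.+2 = lucas n.+1 + lucas n)%N //.
by rewrite plus_INR -!IH //; ring.
Qed.

Lemma mu_lucas n : mu_plus ^ n + mu_minus ^ n = INR (lucas n).
Proof.
have s5 := sqrt_sqrt 5 ltac:(lra).
by apply: golden_pow_lucas; rewrite /mu_plus /mu_minus /=; nra.
Qed.

Lemma INR_muln m k : INR (m * k) = INR m * INR k.
Proof. by rewrite -multE mult_INR. Qed.

Lemma INR_expn m k : INR (m ^ k) = INR m ^ k.
Proof. by elim: k => [|k IH]; rewrite ?expn0 // expnS INR_muln IH. Qed.

Lemma INR_leq m k : (m <= k)%N -> INR m <= INR k.
Proof. by move/leP; apply: le_INR. Qed.

Lemma sqrt2_pow_le_pow2 k j : (k <= 2 * j)%N -> sqrt 2 ^ k <= INR (2 ^ j).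
Proof.
move=> kj; rewrite INR_expn (_ : INR 2 = sqrt 2 ^ 2); last by rewrite pow2_sqrt /=; lra.
rewrite -pow_mult multE; apply: Rle_pow; last exact/leP.
by rewrite -sqrt_1; apply: sqrt_le_1_alt; lra.
Qed.

Section GoodShapes.
Variables (n : nat) (H : graph n).

Definition good_shapes : {set graph n} :=
  [set S : graph n | is_shape H S &&
     (if Rle_dec (2 * (mu_plus ^ n + mu_minus ^ n)) (INR (nfold H S))
      then true else false)].

Lemma nfold_good_shape S :
  is_shape H S -> (2 * lucas n <= nfold H S)%N -> S \in good_shapes.
Proof.
move=> sh le; rewrite inE sh; case: Rle_dec => // [[]].
by rewrite mu_lucas -(INR_muln 2); apply: INR_leq.
Qed.

Lemma cut_edges_good (U : {set 'I_n}) : (0 < n)%N ->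
  (lucas n <= 2 ^ (n - #|U|))%N -> cut_edges H U \in good_shapes.
Proof.
move=> n0 le; apply: nfold_good_shape.
  by apply/existsP; exists (cut_seq U true set0); rewrite shape_cut_seq.
by apply: leq_trans (nfold_cut_edges H U n0); rewrite leq_mul2l.
Qed.

End GoodShapes.

Close Scope R_scope.

Lemma eq_ord_nonzero t (a b : 'I_t) :
  (forall k : 'I_t, (0 < k) && (a == k) = (0 < k) && (b == k)) -> a = b.
Proof.
move=> ab; case: (posnP a) => [a0|a_pos]; last first.
  by have := ab a; rewrite a_pos eqxx => /esym/eqP.
case: (posnP b) => [b0|b_pos]; first by apply: val_inj; rewrite /= a0 b0.
by have := ab b; rewrite b_pos eqxx => /eqP.
Qed.

Lemma divmod_uniq t j k j' k' :
  (k < t)%N -> (k' < t)%N -> t * j + k = t * j' + k' -> j = j' /\ k = k'.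
Proof.
move=> kt k't E; have jj : j = j' by nia.
by split; [|subst j'; lia].
Qed.

Lemma block_offset_lt t b (j : 'I_b) k : (k < t)%N -> (t * j + k < t * b)%N.
Proof. by move=> kt; have := leq_mul (leqnn t) (ltn_ord j); rewrite mulnS; lia. Qed.

(* A set of vertices of a cycle of length m + 1 laid out in b blocks of t
   consecutive vertices followed by one block of e vertices: each block
   contributes at most one vertex, never its first one (value 0 of the choice). *)
Section BlockSets.
Variables (m t b e : nat).

Definition block_set (x : {ffun 'I_b -> 'I_t} * 'I_e) : {set 'I_m.+1} :=
  [set i : 'I_m.+1 | [exists j, (0 < x.1 j) && (i == t * j + x.1 j :> nat)]
                     || (0 < x.2) && (i == t * b + x.2 :> nat)].

Lemma ord0_notin_block_set x : ord0 \notin block_set x.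
Proof.
rewrite inE negb_or; apply/andP; split; last by apply/nandP; rewrite /=; lia.
by apply/existsP => -[j /andP [x0 /eqP /= ji]]; lia.
Qed.

Lemma card_block_set x : (#|block_set x| <= b.+1)%N.
Proof.
have sub : block_set x \subset
    [set inord (t * j + x.1 j) | j : 'I_b] :|: [set inord (t * b + x.2)].
  apply/subsetP => i; rewrite !inE.
  case/orP=> [/existsP [j /andP [_ /eqP ij]]|/andP [_ /eqP ij]].
    by apply/orP; left; apply/imsetP; exists j; rewrite // -ij inord_val.
  by rewrite -ij inord_val eqxx orbT.
apply: leq_trans (subset_leq_card sub) (leq_trans (leq_card_setU _ _) _).
rewrite cards1 addn1 ltnS; apply: leq_trans (leq_imset_card _ _) _.
by rewrite card_ord.
Qed.

Hypothesis fits : (t * b + e <= m.+1)%N.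

Lemma mem_block_set_block x (j : 'I_b) (k : 'I_t) :
  (inord (t * j + k) \in block_set x) = (0 < k) && (x.1 j == k).
Proof.
have kt := ltn_ord k; have jk_lt := block_offset_lt j kt.
rewrite inE inordK; last by lia.
apply/orP/andP => [[/existsP [j' /andP [x0 /eqP E]]|/andP [_ /eqP E]]|[k0 /eqP xk]].
- case: (divmod_uniq kt (ltn_ord (x.1 j')) E) => /val_inj jj kx; subst j'.
  by split; [rewrite kx | apply/eqP/val_inj].
- by lia.
- by left; apply/existsP; exists j; rewrite xk k0 eqxx.
Qed.

Lemma mem_block_set_tail x (k : 'I_e) :
  (inord (t * b + k) \in block_set x) = (0 < k) && (x.2 == k).
Proof.
have ke := ltn_ord k.
rewrite inE inordK; last by lia.
apply/orP/andP => [[/existsP [j /andP [_ /eqP E]]|/andP [x0 /eqP E]]|[k0 /eqP xk]].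
- by have := block_offset_lt j (ltn_ord (x.1 j)); lia.
- by have kx := addnI E; split; [rewrite kx | apply/eqP/val_inj].
- by right; rewrite xk k0 eqxx.
Qed.

Lemma block_set_inj : injective block_set.
Proof.
move=> [g c] [g' c'] E; congr pair; first apply/ffunP => j.
  apply: eq_ord_nonzero => k.
  by rewrite -(mem_block_set_block (g, c)) -(mem_block_set_block (g', c')) E.
apply: eq_ord_nonzero => k.
by rewrite -(mem_block_set_tail (g, c)) -(mem_block_set_tail (g', c')) E.
Qed.

End BlockSets.

Lemma card_block_index t b e : #|{: {ffun 'I_b -> 'I_t} * 'I_e}| = (t ^ b * e)%N.
Proof. by rewrite card_prod card_ffun !card_ord. Qed.

Section Cycle.
Variables (n m : nat) (s : 'I_m.+1 -> 'I_n).
Hypothesis s_inj : injective s.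

Let C := cycle_edges s.

(* Going around the cycle, each edge of the cut decides whether the next vertex
   is on the same side, so the cut and the side of [ord0] determine the set. *)
Lemma cut_edges_cycle_inj (G G' : {set 'I_m.+1}) : ord0 \notin G -> ord0 \notin G' ->
  cut_edges C (s @: G) = cut_edges C (s @: G') -> G = G'.
Proof.
move=> G0 G'0 E.
have next i : (i \in G) = (i \in G') -> (ordS i \in G) = (ordS i \in G').
  have Ci : [set s i; s (ordS i)] \in C by apply/imsetP; exists i.
  have := congr1 (fun S : graph n => [set s i; s (ordS i)] \in S) E.
  rewrite /= !mem_cut_edges Ci !mem_imset //= => cutE iE; rewrite iE in cutE.
  by move: cutE; case: (i \in G'); case: (ordS i \in G); case: (ordS i \in G').
suff memE j : (j < m.+1)%N -> (inord j \in G) = (inord j \in G').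
  by apply/setP => i; rewrite -(inord_val i); apply: memE.
elim: j => [|j IH] jm.
  have -> : inord 0 = ord0 :> 'I_m.+1 by apply/val_inj/inordK.
  by rewrite (negbTE G0) (negbTE G'0).
have -> : inord j.+1 = ordS (inord j) :> 'I_m.+1.
  by apply/val_inj; rewrite /= !inordK ?modn_small //; lia.
exact/next/IH/ltnW.
Qed.

Lemma card_good_cycle (I : finType) (G : I -> {set 'I_m.+1}) K :
  injective G -> (forall x, ord0 \notin G x) -> (forall x, #|G x| <= K)%N ->
  (lucas n <= 2 ^ (n - K))%N -> (#|I| <= #|good_shapes C|)%N.
Proof.
move=> G_inj G0 GK le.
have cutG_inj : injective (fun x => cut_edges C (s @: G x)).
  by move=> x y /(cut_edges_cycle_inj (G0 x) (G0 y)) /G_inj.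
rewrite -cardsT -(card_imset _ cutG_inj).
apply/subset_leq_card/subsetP => _ /imsetP [x _ ->].
apply: cut_edges_good; first exact: leq_ltn_trans (leq0n _) (ltn_ord (s ord0)).
by apply: leq_trans le (leq_pexp2l _ (leq_sub2l _ _)); rewrite ?card_imset.
Qed.

Lemma card_good_blocks t b e : (t * b + e <= m.+1)%N ->
  (lucas n <= 2 ^ (n - b.+1))%N -> (t ^ b * e <= #|good_shapes C|)%N.
Proof.
move=> fits le; rewrite -card_block_index.
exact: card_good_cycle (block_set_inj fits) (@ord0_notin_block_set _ _ _ _)
  (@card_block_set _ _ _ _) le.
Qed.

End Cycle.

Lemma card_good_two_cycle (s : 'I_2 -> 'I_2) :
  injective s -> (2 <= #|good_shapes (cycle_edges s)|)%N.
Proof.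
move=> s_inj; set C := cycle_edges s.
pose U := [set s ord0]; pose seq_of (p : letter * letter) : seqA 2 :=
  [ffun x => if x == s ord0 then p.1 else p.2].
have s10 : s ord_max != s ord0 by apply/negP => /eqP /s_inj.
have shape_seq_of p : Rdag p.1 p.2 -> Defs.shape C (seq_of p) = cut_edges C U.
  move=> R; rewrite shapeE; apply: eq_rel_edges => a b; rewrite !ffunE !inE.
  by case: (a == s ord0); case: (b == s ord0); rewrite /= ?Rdag_irr // Rdag_sym.
have C_full : cut_edges C set0 != cut_edges C U.
  have ordS0 : ordS ord0 = ord_max :> 'I_2 by apply/val_inj.
  have Ce : [set s ord0; s ord_max] \in C by apply/imsetP; exists ord0; rewrite ?ordS0.
  apply/eqP => /setP /(_ [set s ord0; s ord_max]).
  by rewrite !mem_cut_edges Ce !inE (negbTE s10) !eqxx.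
suff : [set cut_edges C set0; cut_edges C U] \subset good_shapes C.
  by move/subset_leq_card; rewrite cards2 C_full.
rewrite subUset !sub1set cut_edges_good ?cards0 //=.
apply: nfold_good_shape.
  apply/existsP; exists (seq_of (lA, lB)).
  by rewrite shape_seq_of // Rdag_pairs_rel ?mem_head.
have seq_of_inj : injective seq_of.
  move=> [a1 a2] [b1 b2] E.
  have := congr1 (fun v : seqA 2 => (v (s ord0), v (s ord_max))) E.
  by rewrite /= !ffunE eqxx (negbTE s10).
apply: (@leq_trans #|[seq seq_of p | p <- Rdag_pairs]|).
  by rewrite (card_uniqP _) ?size_map // map_inj_uniq ?Rdag_pairs_uniq.
apply/subset_leq_card/subsetP => _ /mapP [p /Rdag_pairs_rel p_rel ->].
by rewrite inE shape_seq_of.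
Qed.

Open Scope R_scope.

Lemma sqrt2_pow_le_even_cycle n m (s : 'I_m.+1 -> 'I_n) :
  injective s -> ~~ odd m.+1 -> n = m.+1 \/ n = m.+2 ->
  sqrt 2 ^ (n - 1) <= INR #|good_shapes (cycle_edges s)|.
Proof.
move=> s_inj m_even hn.
have s2 := sqrt_sqrt 2 ltac:(lra).
have [n2|n2] := eqVneq n 2%N.
  have m1 : m = 1%N by move: m_even; rewrite /= => /negPn; lia.
  subst n m; apply: Rle_trans (INR_leq (card_good_two_cycle s_inj)).
  by rewrite /=; nra.
have [n6|n6] := eqVneq n 6%N.
  have m5 : m = 5%N by move: m_even; rewrite /= => /negPn; lia.
  (* a single block of six vertices: the empty set and five singletons *)
  subst n m; apply: Rle_trans (INR_leq (@card_good_blocks _ _ _ s_inj 1 0 6 isT isT)).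
  replace (sqrt 2 ^ (6 - 1)) with ((sqrt 2 * sqrt 2) * (sqrt 2 * sqrt 2) * sqrt 2)
    by (simpl; ring).
  by rewrite s2 /=; have := sqrt_pos 2; nra.
have [b [e [m_blocks e24]]] : exists b e, (m.+1 = 4 * b + e /\ (e = 2 \/ e = 4))%N.
  exists ((m.+1 - 2) %/ 4)%N, (if m.+1 %% 4 == 2 then 2 else 4)%N.
  by move: m_even; rewrite /= => /negPn; case: ifP => /eqP; lia.
have lucas_n : (lucas n <= 2 ^ (n - b.+1))%N.
  rewrite (_ : b.+1 = (n + 2) %/ 4)%N; last by lia.
  by apply: lucas_le_pow2; [lia | exact/eqP | exact/eqP].
apply: Rle_trans (INR_leq (@card_good_blocks _ _ _ s_inj 4 b e _ lucas_n)); last by lia.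
have -> : (4 ^ b * e = 2 ^ (2 * b + e./2))%N by case: e24 => ->; rewrite expnD expnM.
apply: sqrt2_pow_le_pow2; lia.
Qed.

Theorem lemma2 (n : nat) (H : graph n) :
  (0 < n)%N -> base_graph H ->
  sqrt 2 ^ (n - 1)%N <=
   INR #|[set S : graph n | is_shape H S &&
          (if Rle_dec (2 * (mu_plus ^ n + mu_minus ^ n)) (INR (nfold H S))
           then true else false)]|.
Proof.
move=> n0 [H_even H_odd]; rewrite -/(good_shapes H).
have [n_odd|n_even] := boolP (odd n).
- have [u [s [s_inj [_ ->]]]] := H_odd n_odd.
  case: n n0 n_odd u s s_inj {H H_even H_odd} => [|[|n]] // _ n_odd _ s s_inj.
    apply: Rle_trans (INR_leq (_ : 1 <= _)%N); first by rewrite /=; lra.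
    rewrite card_gt0; apply/set0Pn; exists (cut_edges (cycle_edges s) set0).
    by rewrite cut_edges_good ?cards0.
  apply: sqrt2_pow_le_even_cycle s_inj _ _; last by right.
  by move: n_odd; rewrite /= !negbK.
- have [sigma ->] := H_even n_even.
  case: n n0 n_even sigma {H H_even H_odd} => // n _ n_even sigma.
  by apply: sqrt2_pow_le_even_cycle (@perm_inj _ sigma) n_even _; left.
Qed.
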